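(* For any $n\ge0$ and $q\ge1$, let $\mathcal{A}^+$ (resp. $\mathcal{A}^-$) be the set of words of $\mathcal{W}^q_n$ having an even (resp. odd) number of letters $1$. Then $|\mathcal{A}^+|-|\mathcal{A}^-|\in\{-1,0,1\}$.
   Context: For $q\ge1$, a binary word is $q$-decreasing if for every maximal run of $0$s, of length $a>0$, together with the (possibly empty) maximal run of $1$s immediately following it, of length $b$, one has $q\cdot a>b$; $\mathcal{W}^q_n$ is the set of $q$-decreasing words of length $n$. *)

From mathcomp Require Import all_boot all_order all_algebra.
Set Implicit Arguments. Unset Strict Implicit. Unset Printing Implicit Defensive.

(* Binary words are sequences of booleans: false = letter 0, true = letter 1. *)

(* [qdec q w]: for every decomposition w = u ++ 0^a ++ 1^b ++ v with a > 0,
   where the run 0^a is a maximal run of 0s (u is empty or ends with 1, and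
   the letter after the zeros, if any, is 1) and 1^b is the maximal (possibly
   empty) run of 1s following it (v is empty or starts with 0), we have
   q * a > b. *)
Definition qdec (q : nat) (w : seq bool) : bool :=
  [forall i : 'I_(size w).+1, forall a : 'I_(size w).+1, forall b : 'I_(size w).+1,
    let u := take i w in
    let r := drop i w in
    let v := drop (a + b) r in
    [&& 0 < a,
        take (a + b) r == nseq a false ++ nseq b true,
        last true u,
        head true (nseq b true ++ v) &
        ~~ head false v]
    ==> (b < q * a)].

Definition Wq (q n : nat) : {set n.-tuple bool} :=
  [set w : n.-tuple bool | qdec q w].

Definition Aplus (q n : nat) : {set n.-tuple bool} :=
  [set w in Wq q n | ~~ odd (count id w)].
Definition Aminus (q n : nat) : {set n.-tuple bool} :=
  [set w in Wq q n | odd (count id w)].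

From mathcomp Require Import all_boot all_order all_algebra.
From mathcomp Require Import zify ring.

(* Let D n be the signed count, with sign (-1)^(number of 1s), of the q-decreasing
   words of length n, and V n the same count restricted to words that are empty or
   end with 1.  Pairing w0 with w1 whenever both are q-decreasing shows that D (n+1)
   is the signed count of the "saturated" words of length n, those ending with a
   maximal block 0^a 1^(qa-1); such a word is a V-word followed by that block, so
   D (n+1) = - sum_(a >= 1) (-1)^(qa) V (n+1 - (q+1)a).  Together with
   D (n+1) = D n + V (n+1) this yields D (n+q+2) = (-1)^q D n, so |D n| <= 1
   follows from the initial values D 0 = 1, D n = 0 for 0 < n <= q and
   D (q+1) = -(-1)^q. *)

Set Implicit Arguments.
Unset Strict Implicit.
Unset Printing Implicit Defensive.

Definition tail_step (s : nat * nat) (x : bool) : nat * nat :=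
  if x then (s.1, s.2.+1) else if s.2 == 0 then (s.1.+1, 0) else (1, 0).

(* [tail_runs w = (a, b)]: [b] is the length of the run of 1s ending [w] and [a]
   the length of the maximal run of 0s just before it ([a = 0] if there is none). *)
Definition tail_runs (w : seq bool) : nat * nat := foldl tail_step (0, 0) w.

Lemma nseqSr T n (x : T) : nseq n.+1 x = rcons (nseq n x) x.
Proof. by rewrite -cats1 -addn1 nseqD. Qed.

Lemma tail_runs_rcons w x : tail_runs (rcons w x) = tail_step (tail_runs w) x.
Proof. exact: foldl_rcons. Qed.

Lemma tail_runsP w :
  exists2 U, last true U & w = U ++ nseq (tail_runs w).1 false ++ nseq (tail_runs w).2 true.
Proof.
elim/last_ind: w => [|w x [U lastU Ew]]; first by exists [::].
rewrite tail_runs_rcons /tail_step {1}Ew; case: (tail_runs w) => a b /=; case: x.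
  by exists U; rewrite // nseqSr -!rcons_cat.
case: eqP => [-> | /eqP b_neq0].
  by exists U; rewrite // !cats0 nseqSr -rcons_cat.
exists (U ++ nseq a false ++ nseq b true); last by rewrite cats1.
by case: b b_neq0 => // b _; rewrite !last_cat nseqSr last_rcons.
Qed.

Lemma tail_runs_block U a b : last true U -> 0 < a ->
  tail_runs (U ++ nseq a false ++ nseq b true) = (a, b).
Proof.
move=> lastU a_gt0; elim: b => [|b IHb]; last first.
  by rewrite nseqSr -!rcons_cat tail_runs_rcons IHb.
rewrite cats0; case: a a_gt0 => // a _; elim: a => [|a IHa].
  rewrite cats1 tail_runs_rcons; case/lastP: U lastU => //= U x.
  by rewrite last_rcons => ->; rewrite tail_runs_rcons.
by rewrite nseqSr -rcons_cat tail_runs_rcons IHa.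
Qed.

Section QDecreasing.

Variable q : nat.
Hypothesis q_gt0 : 0 < q.

Definition admissible (s : nat * nat) : bool := (s.1 == 0) || (s.2 < q * s.1).

Lemma qdec_maximal_block U a b V :
  qdec q (U ++ nseq a false ++ nseq b true ++ V) -> 0 < a -> 0 < b ->
  last true U -> ~~ head false V -> b < q * a.
Proof.
set w := U ++ _ => qw a_gt0 b_gt0 lastU hV.
have size_w : size w = size U + a + b + size V by rewrite /w !size_cat !size_nseq; lia.
have iU : size U < (size w).+1 by lia.
have ia : a < (size w).+1 by lia.
have ib : b < (size w).+1 by lia.
move/forallP/(_ (Ordinal iU))/forallP/(_ (Ordinal ia))/forallP/(_ (Ordinal ib)): qw.
have size_block : size (nseq a false ++ nseq b true) = a + b.
  by rewrite size_cat !size_nseq.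
move/implyP; apply => /=.
rewrite /w take_size_cat // drop_size_cat // catA take_size_cat // drop_size_cat //.
by rewrite a_gt0 eqxx lastU hV; case: (b) b_gt0.
Qed.

Lemma split_leading_ones s : exists c, exists2 V, s = nseq c true ++ V & ~~ head false V.
Proof.
elim: s => [|x s [c [V -> hV]]]; first by exists 0, [::].
by case: x; [exists c.+1, V | exists 0, (false :: nseq c true ++ V)].
Qed.

Lemma qdec_prefixP w :
  reflect (forall p s, w = p ++ s -> admissible (tail_runs p)) (qdec q w).
Proof.
apply: (iffP idP) => [qw p s ew | adm].
  have [U lastU] := tail_runsP p; rewrite /admissible.
  case: (tail_runs p) => a b /= ep.
  have [-> // | a_gt0] := posnP a; have [-> | b_gt0] := posnP b.
    by rewrite muln_gt0 q_gt0 a_gt0 orbT.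
  have [c [V es hV]] := split_leading_ones s.
  apply/orP; right; apply: leq_ltn_trans (leq_addr c b) _.
  apply: (@qdec_maximal_block U _ _ V) => //; last by rewrite addn_gt0 b_gt0.
  by move: qw; rewrite ew ep es nseqD -!catA.
apply/forallP => i; apply/forallP => a; apply/forallP => b; apply/implyP.
case/and5P => a_gt0 /eqP eblock lastU _ _.
have := adm (take (i + (a + b)) w) (drop (i + (a + b)) w) (esym (cat_take_drop _ w)).
by rewrite takeD eblock tail_runs_block // /admissible /= eqn0Ngt a_gt0.
Qed.

Lemma qdec_rcons w x :
  qdec q (rcons w x) = qdec q w && admissible (tail_runs (rcons w x)).
Proof.
apply/qdec_prefixP/andP => [adm | [/qdec_prefixP adm_w adm_wx] p s].
  split; last by apply: (adm _ [::]); rewrite cats0.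
  by apply/qdec_prefixP => p s ew; apply: (adm p (rcons s x)); rewrite ew rcons_cat.
case/lastP: s => [|s y]; first by rewrite cats0 => <-.
by rewrite -rcons_cat => /rcons_inj [/adm_w].
Qed.

Lemma qdec_rcons0 w : qdec q (rcons w false) = qdec q w.
Proof.
rewrite qdec_rcons tail_runs_rcons /tail_step /admissible.
by case: (tail_runs w) => a b; case: (b == 0); rewrite /= ?muln1 ?muln_gt0 q_gt0 andbT.
Qed.

Lemma qdec_nil : qdec q [::].
Proof.
apply/qdec_prefixP => p s /esym/eqP.
by rewrite -size_eq0 size_cat addn_eq0 size_eq0 => /andP [/eqP -> _].
Qed.

Lemma qdec_cat_nseq0 U a : qdec q (U ++ nseq a false) = qdec q U.
Proof.
elim: a => [|a IHa]; first by rewrite cats0.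
by rewrite nseqSr -rcons_cat qdec_rcons0.
Qed.

Lemma qdec_block U a b : last true U -> 0 < a ->
  qdec q (U ++ nseq a false ++ nseq b true) = qdec q U && (b < q * a).
Proof.
move=> lastU a_gt0; elim: b => [|b IHb].
  by rewrite /= cats0 qdec_cat_nseq0 muln_gt0 q_gt0 a_gt0; case: (qdec q U).
rewrite nseqSr -!rcons_cat qdec_rcons IHb !rcons_cat -nseqSr tail_runs_block //.
by rewrite /admissible /= (gtn_eqF a_gt0) -andbA (andb_idl (@ltnW _ _)).
Qed.

Definition saturated w := qdec q w && ~~ qdec q (rcons w true).

Lemma saturated_block U a b : last true U -> 0 < a ->
  saturated (U ++ nseq a false ++ nseq b true) = qdec q U && (b.+1 == q * a).
Proof.
move=> lastU a_gt0; rewrite /saturated !rcons_cat -nseqSr !qdec_block //.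
by case: (qdec q U); rewrite //= -leqNgt eqn_leq.
Qed.

Lemma saturated_tail_gt0 w : saturated w -> 0 < (tail_runs w).1.
Proof.
rewrite /saturated qdec_rcons tail_runs_rcons /admissible.
by case: (tail_runs w) => [[|a] b]; rewrite //= andbT andbN.
Qed.

End QDecreasing.

Import GRing.Theory Num.Theory.
Local Open Scope ring_scope.

Fixpoint words n : seq (seq bool) :=
  if n is n'.+1
  then [seq rcons w false | w <- words n'] ++ [seq rcons w true | w <- words n']
  else [:: [::]].

Lemma mem_words n w : (w \in words n) = (size w == n).
Proof.
elim: n w => [|n IHn] w; first by rewrite inE size_eq0.
case/lastP: w => [|w x]; rewrite /= mem_cat.
  by apply/negbTE/norP; split; apply/mapP => -[] [].
have mem_rcons_map y (L : seq (seq bool)) :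
    (rcons w x \in [seq rcons u y | u <- L]) = (x == y) && (w \in L).
  apply/mapP/andP => [[u Lu /rcons_inj [-> ->]] | [/eqP -> Lw]]; last by exists w.
  by rewrite eqxx.
by rewrite !mem_rcons_map IHn size_rcons eqSS; case: (x); rewrite /= ?orbF.
Qed.

Lemma uniq_words n : uniq (words n).
Proof.
elim: n => //= n IHn; rewrite cat_uniq !(map_inj_uniq (@rcons_injl _ _)) IHn andbT /=.
by apply/hasPn => _ /mapP [u _ ->]; apply/mapP => -[w _ /rcons_inj].
Qed.

Section WordSums.

Variable R : nmodType.

Lemma sum_tuples_words n (F : seq bool -> R) :
  \sum_(t : n.-tuple bool) F t = \sum_(w <- words n) F w.
Proof.
rewrite -(big_map val xpredT F); apply/perm_big/uniq_perm.
- by rewrite (map_inj_uniq val_inj) // index_enum_uniq.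
- exact: uniq_words.
move=> w; rewrite mem_words; apply/mapP/idP => [[t _ ->]|sw].
  by rewrite size_tuple.
by exists (Tuple sw); rewrite // mem_index_enum.
Qed.

Lemma sum_wordsS n (P : pred (seq bool)) (F : seq bool -> R) :
  \sum_(w <- words n.+1 | P w) F w =
  \sum_(w <- words n | P (rcons w false)) F (rcons w false) +
  \sum_(w <- words n | P (rcons w true)) F (rcons w true).
Proof. by rewrite big_cat !big_map. Qed.

Lemma sum_words_reindex k m (g : seq bool -> seq bool) (P Q : pred (seq bool))
    (F : seq bool -> R) :
  injective g ->
  (forall U, size U = k -> Q U -> (size (g U) == m) && P (g U)) ->
  (forall w, size w = m -> P w -> exists2 U, (size U == k) && Q U & w = g U) ->
  \sum_(w <- words m | P w) F w = \sum_(U <- words k | Q U) F (g U).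
Proof.
move=> g_inj gQ Pg; rewrite -big_filter -[RHS]big_filter -(big_map g xpredT F).
apply/perm_big/uniq_perm.
- by rewrite filter_uniq // uniq_words.
- by rewrite (map_inj_uniq g_inj) // filter_uniq // uniq_words.
move=> w; rewrite mem_filter mem_words; apply/andP/mapP => [[Pw /eqP sw] | [U]].
  have [U /andP [sU QU] ->] := Pg w sw Pw.
  by exists U; rewrite // mem_filter mem_words QU.
by rewrite mem_filter mem_words => /andP [QU /eqP sU] ->; case/andP: (gQ U sU QU).
Qed.

Lemma big_partition_seq (I J : eqType) (s : seq I) (r : seq J) (P : pred I)
    (f : I -> J) (F : I -> R) :
  uniq r -> {in s, forall i, P i -> f i \in r} ->
  \sum_(i <- s | P i) F i = \sum_(j <- r) \sum_(i <- s | P i && (f i == j)) F i.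
Proof.
move=> r_uniq sPr; rewrite -(exchange_big_dep xpredT) //= big_seq_cond [RHS]big_seq_cond.
apply: eq_bigr => i /andP [si Pi]; rewrite big_const_seq.
have -> : count (fun j => f i == j) r = count_mem (f i) r.
  by apply: eq_count => j; rewrite eq_sym.
by rewrite count_uniq_mem // sPr //= addr0.
Qed.

End WordSums.

Definition sgn (w : seq bool) : int := (-1) ^+ count id w.

Lemma sgn_cat u v : sgn (u ++ v) = sgn u * sgn v.
Proof. by rewrite /sgn count_cat exprD. Qed.

Lemma sgn_nseq n x : sgn (nseq n x) = (-1) ^+ (x * n).
Proof. by rewrite /sgn count_nseq. Qed.

Definition signed_count (P : pred (seq bool)) n : int := \sum_(w <- words n | P w) sgn w.

Lemma signed_count0 P : signed_count P 0 = if P [::] then 1 else 0.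
Proof. by rewrite /signed_count big_cons big_nil addr0. Qed.

Lemma signed_countS P n :
  signed_count P n.+1 =
  signed_count (fun w => P (rcons w false)) n - signed_count (fun w => P (rcons w true)) n.
Proof.
rewrite /signed_count sum_wordsS -sumrN.
by congr (_ + _); apply: eq_bigr => w _; rewrite -cats1 sgn_cat ?mulr1 ?mulrN1.
Qed.

Definition conv q (V : nat -> int) k : int :=
  \sum_(1 <= a < k.+1 | (q.+1 * a <= k)%N) (-1) ^+ (q * a) * V (k - q.+1 * a)%N.

Lemma conv_small q V k : (k <= q)%N -> conv q V k = 0.
Proof.
move=> le_kq; apply: big1_seq => a /andP [le_qa_k]; rewrite mem_index_iota; nia.
Qed.

Lemma conv_shift q V k : conv q V (k + q.+1) = (-1) ^+ q * (V k + conv q V k).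
Proof.
rewrite /conv big_ltn_cond; last by rewrite ltnS addnS.
rewrite !muln1 leq_addl addnK mulrDr; congr (_ + _).
have le_k : (k.+1 <= k + q.+1)%N by rewrite addnS ltnS leq_addr.
rewrite big_add1 /= mulr_sumr [in RHS](big_nat_widen _ _ _ _ _ le_k).
apply: eq_big => [a | a _].
  rewrite mulnSr leq_add2r; case: leqP => //= le_qa; apply/esym; nia.
by rewrite !mulnSr subnDr exprD -mulrA mulrCA.
Qed.

Section SignPeriodicity.

Variables (q : nat) (D V : nat -> int).
Hypotheses (D0 : D 0 = 1) (V0 : V 0 = 1).
Hypothesis D_V : forall n, D n.+1 = D n + V n.+1.
Hypothesis D_conv : forall n, D n.+1 = - conv q V n.+1.

Lemma D_period n : D (n + q.+2) = (-1) ^+ q * D n.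
Proof.
have conv_D m : conv q V m.+1 = - D m.+1 by rewrite D_conv opprK.
rewrite addnS D_conv -addSn conv_shift conv_D D_V; ring.
Qed.

Lemma D_norm_le1 n : `|D n| <= 1.
Proof.
elim/ltn_ind: n => n IHn; have [le_n | lt_n] := leqP q.+2 n.
  by rewrite -(subnK le_n) D_period normrMsign IHn //; lia.
case: n lt_n {IHn} => [_ | n lt_n]; first by rewrite D0 normr1.
have [lt_nq | ->] : (n < q)%N \/ n = q by lia.
  by rewrite D_conv conv_small // normrN normr0.
by rewrite D_conv -[q.+1]add0n conv_shift conv_small // V0 addr0 mulr1 normrN normr_sign.
Qed.

End SignPeriodicity.

Section QDecreasingCounts.

Variable q : nat.
Hypothesis q_gt0 : (0 < q)%N.

Local Notation D := (signed_count (qdec q)).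
Local Notation V := (signed_count (fun w => qdec q w && last true w)).

Lemma signed_count_qdecS n : D n.+1 = D n + V n.+1.
Proof.
rewrite !signed_countS /signed_count (eq_bigl _ _ (qdec_rcons0 q_gt0)).
rewrite [X in _ + (X - _)]big_pred0 => [|w]; last by rewrite last_rcons andbF.
by rewrite sub0r; under [X in _ = _ - X]eq_bigl do rewrite last_rcons andbT.
Qed.

Lemma signed_count_qdec_saturated n : D n.+1 = signed_count (saturated q) n.
Proof.
have qdec_rcons1_prefix w : qdec q w && qdec q (rcons w true) = qdec q (rcons w true).
  by rewrite qdec_rcons; case: (qdec q w).
rewrite signed_countS /signed_count (eq_bigl _ _ (qdec_rcons0 q_gt0)).
rewrite (bigID (fun w => qdec q (rcons w true))) /= (eq_bigl _ _ qdec_rcons1_prefix).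
by rewrite addrAC subrr add0r.
Qed.

Definition saturated_count a m :=
  signed_count (fun w => saturated q w && ((tail_runs w).1 == a)) m.

Lemma signed_count_saturated m :
  signed_count (saturated q) m = \sum_(1 <= a < m.+2) saturated_count a m.
Proof.
rewrite /signed_count (big_partition_seq (f := fun w => (tail_runs w).1)
  (r := index_iota 1 m.+2)) ?iota_uniq //.
move=> w; rewrite mem_words mem_index_iota => /eqP <- /(saturated_tail_gt0 q_gt0) ->.
by have [U _ {2}->] := tail_runsP w; rewrite /= !size_cat !size_nseq; lia.
Qed.

Lemma saturated_countE a m : (0 < a)%N ->
  saturated_count a m =
  if (q.+1 * a <= m.+1)%N then - ((-1) ^+ (q * a) * V (m.+1 - q.+1 * a)) else 0.
Proof.
move=> a_gt0; have qa_gt0 : (0 < q * a)%N by rewrite muln_gt0 q_gt0 a_gt0.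
pose block U := U ++ nseq a false ++ nseq (q * a).-1 true.
have saturated_decomp w : saturated q w && ((tail_runs w).1 == a) ->
    exists2 U, qdec q U && last true U & w = block U.
  case/andP => sat_w /eqP tw_a; have [U lastU ew] := tail_runsP w.
  move: sat_w; rewrite ew tw_a saturated_block // => /andP [qU /eqP eb].
  by exists U; rewrite ?qU ?lastU // /block -eb.
have size_block U : size (block U) = (size U + q.+1 * a).-1.
  by rewrite /block !size_cat !size_nseq mulSn; lia.
case: leqP => [le_m | gt_m]; last first.
  apply: big1_seq => w /andP [/saturated_decomp [U _ ->]].
  by rewrite mem_words size_block => /eqP; lia.
rewrite /saturated_count /signed_count (@sum_words_reindex _ (m.+1 - q.+1 * a) m block _
  (fun U => qdec q U && last true U)).
- have sign_pred : (-1) ^+ (q * a).-1 = - (-1) ^+ (q * a) :> int.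
    by rewrite -{2}(prednK qa_gt0) exprS mulN1r opprK.
  rewrite -mulNr mulr_sumr; apply: eq_bigr => U _.
  by rewrite !sgn_cat !sgn_nseq mul0n mul1n expr0 mul1r sign_pred mulrC.
- move=> U1 U2 eU; have /eqP := eU; rewrite eqseq_cat => [/andP [/eqP] //|].
  by move/(congr1 size)/eqP: eU; rewrite /block !size_cat eqn_add2r => /eqP.
- move=> U sU /andP [qU lastU]; rewrite size_block sU subnK //.
  by rewrite saturated_block // qU prednK // /block tail_runs_block //= !eqxx.
move=> w sw /saturated_decomp [U /andP [qU lastU] ew]; exists U => //.
by rewrite qU lastU andbT; move: sw; rewrite ew size_block; lia.
Qed.

Lemma signed_count_qdec_conv n : D n.+1 = - conv q V n.+1.
Proof.
rewrite signed_count_qdec_saturated signed_count_saturated /conv -sumrN [RHS]big_mkcond.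
by apply: eq_big_nat => a /andP [a_gt0 _]; rewrite saturated_countE.
Qed.

End QDecreasingCounts.

Lemma card_Aplus_sub_Aminus q n :
  #|Aplus q n|%:Z - #|Aminus q n|%:Z = signed_count (qdec q) n.
Proof.
have card_sum (A : {set n.-tuple bool}) : #|A|%:Z = \sum_(t in A) 1.
  by rewrite sumr_const natz.
rewrite /signed_count big_mkcond -sum_tuples_words -big_mkcond /=.
rewrite (bigID (fun t : n.-tuple bool => odd (count id t))) /= addrC.
rewrite !card_sum -sumrN; congr (_ + _); apply: eq_big => t; rewrite ?inE //.
  by case/andP => _ /negbTE even_t; rewrite /sgn -signr_odd even_t.
by case/andP => _ odd_t; rewrite /sgn -signr_odd odd_t.
Qed.

Theorem corollary1 (n q : nat) (hq : (1 <= q)%N) :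
  (#|Aplus q n|%:Z - #|Aminus q n|%:Z) \in [:: -1; 0; 1].
Proof.
have D0 : signed_count (qdec q) 0 = 1 by rewrite signed_count0 qdec_nil.
have V0 : signed_count (fun w => qdec q w && last true w) 0 = 1.
  by rewrite signed_count0 qdec_nil.
have := D_norm_le1 D0 V0 (signed_count_qdecS hq) (signed_count_qdec_conv hq) n.
rewrite card_Aplus_sub_Aminus ler_norml !inE; lia.
Qed.
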